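(* Fix $x\in\mathbb{R}^n$ (deterministic) and let $A$ follow the stochastic block model described in the context. Then for every $k\in[K]$, $$\lambda_{\min}\big(\mathbb{E}(H_k)\big)\ \ge\ \min_{k'\in[K]} B_{k',k}(1-B_{k',k})(n_k-1)\,\|x^{(k')}\|_2^2,$$ where the expectation is over $A$.
   Context: Let $n\ge2$, $K\ge1$, $Z\in\{0,1\}^{n\times K}$ a community membership matrix (each row has exactly one $1$), $\psi_i$ the community of node $i$, $n_k=\sum_i Z_{i,k}\ge1$. Stochastic block model: $B\in[0,1]^{K\times K}$ symmetric, $P=ZBZ^\top$; the entries $\{A_{i,j}\}_{i<j}$ are independent Bernoulli$(P_{i,j})$ random variables, $A_{j,i}=A_{i,j}$, and $A_{i,i}=1$ for all $i$ (deterministic self-loops). $*$ is the Hadamard product, $1_n$ the all-ones vector. $M_k=\mathrm{diag}(Z_{\cdot,k})(1_n x^\top * A)Z\in\mathbb{R}^{n\times K}$, $H_k=M_k^\top M_k$, and $x^{(k')}=Z_{\cdot,k'}*x$ (the entries of $x$ in community $k'$, zero elsewhere). $\lambda_{\min}$ denotes smallest eigenvalue. *)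

From HB Require Import structures.
From mathcomp Require Import all_boot all_order all_algebra.
From mathcomp Require Import reals.
Set Implicit Arguments. Unset Strict Implicit. Unset Printing Implicit Defensive.
Import Order.TTheory GRing.Theory Num.Theory.
Local Open Scope ring_scope.

Section SBM.
Variables (R : realType) (n K : nat).

Definition Zmat (psi : 'I_n -> 'I_K) : 'M[R]_(n, K) :=
  \matrix_(i < n, k < K) (psi i == k)%:R.

Definition comm_size (psi : 'I_n -> 'I_K) (k : 'I_K) : nat :=
  #|[set i | psi i == k]|.

Definition hadamard (m p : nat) (A B : 'M[R]_(m, p)) : 'M[R]_(m, p) :=
  map2_mx *%R A B.

(* Unordered pairs {i,j} with i < j : the index set of independent entries *)
Definition upair := {p : 'I_n * 'I_n | (p.1 < p.2)%N}.

(* sample space: one Bernoulli outcome per pair i < j *)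
Definition outcome := {ffun upair -> bool}.

(* adjacency matrix built from an outcome: symmetric, diagonal = 1 *)
Definition adj (w : outcome) : 'M[R]_n :=
  \matrix_(i < n, j < n)
    (if (insub (i, j) : option upair) is Some p then (w p)%:R
     else if (insub (j, i) : option upair) is Some p then (w p)%:R
     else 1).

Definition weight (P : 'M[R]_n) (w : outcome) : R :=
  \prod_(p : upair) (if w p then P (val p).1 (val p).2
                     else 1 - P (val p).1 (val p).2).

Definition Expect (P : 'M[R]_n) (m p : nat) (F : 'M[R]_n -> 'M[R]_(m, p))
  : 'M[R]_(m, p) :=
  \sum_(w : outcome) weight P w *: F (adj w).

Definition Mk (psi : 'I_n -> 'I_K) (x : 'cV[R]_n) (k : 'I_K) (A : 'M[R]_n)
  : 'M[R]_(n, K) :=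
  diag_mx (col k (Zmat psi))^T
    *m hadamard ((const_mx 1 : 'cV[R]_n) *m x^T) A *m Zmat psi.

Definition Hk (psi : 'I_n -> 'I_K) (x : 'cV[R]_n) (k : 'I_K) (A : 'M[R]_n)
  : 'M[R]_K :=
  (Mk psi x k A)^T *m Mk psi x k A.

Definition xcomm (psi : 'I_n -> 'I_K) (x : 'cV[R]_n) (k' : 'I_K) : 'cV[R]_n :=
  hadamard (col k' (Zmat psi)) x.

Definition sqnorm (v : 'cV[R]_n) : R := \sum_(i < n) v i 0 ^+ 2.

Definition min_over (f : 'I_K -> R) (k0 : 'I_K) : R :=
  \big[Order.min/f k0]_(k' < K) f k'.

Definition lambda_min_ge (S : 'M[R]_K) (c : R) : Prop :=
  forall a : R, eigenvalue S a -> c <= a.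

End SBM.

From HB Require Import structures.
From mathcomp Require Import all_boot all_order all_algebra.
From mathcomp Require Import reals ring.
Set Implicit Arguments. Unset Strict Implicit. Unset Printing Implicit Defensive.
Import Order.TTheory GRing.Theory Num.Theory.
Local Open Scope ring_scope.

(* For any row vector v, v E(H_k) v^T = E |M_k v^T|^2 is the sum, over the
   rows i of community k, of E (sum_j y_j A_ij)^2 with y_j = x_j v_(psi j).  In
   row i the entries A_ij, j <> i, are independent Bernoulli variables, so this
   second moment is at least the variance
   sum_(j <> i) y_j^2 B_(psi j,k) (1 - B_(psi j,k)).  Each j is counted by at
   least n_k - 1 rows i, and grouping the y_j by community gives
   sum_k' v_k'^2 B_k'k (1 - B_k'k) (n_k - 1) |x^(k')|^2, which dominates the
   minimum of these coefficients times |v|^2. *)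

Section FiniteExpectation.
Variables (R : realDomainType) (T : finType) (mu : T -> R).

Definition expect (f : T -> R) : R := \sum_t mu t * f t.

Lemma eq_expect (f g : T -> R) : f =1 g -> expect f = expect g.
Proof. by move=> fg; apply: eq_bigr => t _; rewrite fg. Qed.

Lemma expectD (f g : T -> R) :
  expect (fun t => f t + g t) = expect f + expect g.
Proof. by rewrite /expect -big_split; apply: eq_bigr => t _; rewrite mulrDr. Qed.

Lemma expectZ (c : R) (f : T -> R) : expect (fun t => c * f t) = c * expect f.
Proof. by rewrite /expect mulr_sumr; apply: eq_bigr => t _; rewrite mulrCA. Qed.

Lemma expect_sum (I : finType) (F : I -> T -> R) :
  expect (fun t => \sum_i F i t) = \sum_i expect (F i).
Proof.
by rewrite /expect; under eq_bigr do rewrite mulr_sumr; exact: exchange_big.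
Qed.

Lemma expect0 : expect (fun => 0) = 0.
Proof. by rewrite /expect big1 // => t _; rewrite mulr0. Qed.

Hypothesis mu_sum1 : \sum_t mu t = 1.

Lemma expect_cst (c : R) : expect (fun => c) = c.
Proof. by rewrite /expect -[RHS]mul1r -mu_sum1 mulr_suml. Qed.

(* Indeed [E (sum_j y_j X_j)^2 = sum_j y_j^2 Var X_j + (sum_j y_j m_j)^2]. *)
Lemma expect_sqr_sum_ge (I : finType) (X : I -> T -> R) (m y : I -> R) :
  (forall j, expect (fun t => X j t - m j) = 0) ->
  (forall j j', j != j' ->
     expect (fun t => (X j t - m j) * (X j' t - m j')) = 0) ->
  \sum_j y j ^+ 2 * expect (fun t => (X j t - m j) ^+ 2)
    <= expect (fun t => (\sum_j y j * X j t) ^+ 2).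
Proof.
move=> centered uncorrelated.
pose D j t := X j t - m j; pose m0 := \sum_j y j * m j.
have splitE t : (\sum_j y j * X j t) ^+ 2 =
    \sum_j \sum_j' y j * y j' * (D j t * D j' t)
    + (2 * m0 * \sum_j y j * D j t + m0 ^+ 2).
  have -> : \sum_j y j * X j t = \sum_j y j * D j t + m0.
    by rewrite -big_split; apply: eq_bigr => j _ /=; rewrite /D; ring.
  have -> : \sum_j \sum_j' y j * y j' * (D j t * D j' t)
            = (\sum_j y j * D j t) ^+ 2.
    rewrite expr2 mulr_suml; apply: eq_bigr => j _; rewrite mulr_sumr.
    by apply: eq_bigr => j' _; ring.
  ring.
have D_sum0 : expect (fun t => \sum_j y j * D j t) = 0.
  by rewrite expect_sum big1 // => j _; rewrite (expectZ _ (D j)) centered mulr0.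
have D_sqr j : expect (fun t => \sum_j' y j * y j' * (D j t * D j' t))
               = y j ^+ 2 * expect (fun t => (X j t - m j) ^+ 2).
  rewrite expect_sum (bigD1 j) //= big1 ?addr0 => [|j' jj'].
    by rewrite (expectZ _ (fun t => D j t * D j t)) expr2.
  by rewrite (expectZ _ (fun t => D j t * D j' t)) uncorrelated ?mulr0 // eq_sym.
rewrite (eq_expect splitE) !expectD expect_sum expect_cst.
rewrite (expectZ _ (fun t => \sum_j y j * D j t)) D_sum0 mulr0 add0r.
under [X in _ <= X + _]eq_bigr do rewrite D_sqr.
by rewrite lerDl sqr_ge0.
Qed.
End FiniteExpectation.

Section BernoulliOutcomes.
Variables (R : realType) (n : nat) (P : 'M[R]_n).

Definition pair_prob (p : upair n) : R := P (val p).1 (val p).2.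

Local Notation E := (expect (weight P)).

Lemma expect_prod (g : upair n -> bool -> R) :
  E (fun w => \prod_p g p (w p))
  = \prod_p (pair_prob p * g p true + (1 - pair_prob p) * g p false).
Proof.
pose F p b := (if b then pair_prob p else 1 - pair_prob p) * g p b.
rewrite /expect (eq_bigr (fun w : outcome n => \prod_p F p (w p))) => [|w _].
  by rewrite -(bigA_distr_bigA F); apply: eq_bigr => p _; rewrite big_bool.
by rewrite /weight -big_split.
Qed.

Lemma weight_sum1 : \sum_w weight P w = 1.
Proof.
transitivity (E (fun w => \prod_p (fun _ _ => 1) p (w p))).
  by apply: eq_bigr => w _; rewrite big1 ?mulr1.
by rewrite (expect_prod (fun _ _ => 1)) big1 // => p _; ring.
Qed.

Lemma prod_if1 (F : upair n -> R) q :
  \prod_p (if p == q then F p else 1) = F q.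
Proof. by rewrite -big_mkcond big_pred1_eq. Qed.

Lemma prod_if2 (F G : upair n -> R) q q' : q != q' ->
  \prod_p (if p == q then F p else if p == q' then G p else 1) = F q * G q'.
Proof.
move=> qq'; rewrite (bigD1 q) // (bigD1 q') 1?eq_sym //= eqxx eq_sym (negbTE qq').
by rewrite eqxx big1 ?mulr1 // => p /andP[/negbTE-> /negbTE->].
Qed.

Lemma expect_coord (q : upair n) (f : bool -> R) :
  E (fun w => f (w q)) = pair_prob q * f true + (1 - pair_prob q) * f false.
Proof.
pose g p b := if p == q then f b else 1.
transitivity (E (fun w => \prod_p g p (w p))).
  by apply: eq_expect => w; rewrite prod_if1.
rewrite expect_prod (eq_bigr (fun p => if p == q then
  pair_prob p * f true + (1 - pair_prob p) * f false else 1)) ?prod_if1 // => p _.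
by rewrite /g; case: (p == q) => //; ring.
Qed.

Lemma expect_coord2 (q q' : upair n) (f f' : bool -> R) : q != q' ->
  E (fun w => f (w q) * f' (w q'))
  = (pair_prob q * f true + (1 - pair_prob q) * f false)
    * (pair_prob q' * f' true + (1 - pair_prob q') * f' false).
Proof.
move=> qq'; pose g p b := if p == q then f b else if p == q' then f' b else 1.
transitivity (E (fun w => \prod_p g p (w p))).
  by apply: eq_expect => w; rewrite prod_if2.
rewrite expect_prod (eq_bigr (fun p => if p == q then
    pair_prob p * f true + (1 - pair_prob p) * f false
  else if p == q' then pair_prob p * f' true + (1 - pair_prob p) * f' false
  else 1)) ?prod_if2 // => p _.
by rewrite /g; case: (p == q); case: (p == q') => //; ring.
Qed.

Lemma expect_centered q : E (fun w => (w q)%:R - pair_prob q) = 0.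
Proof. by rewrite (expect_coord q (fun b => b%:R - pair_prob q)) /=; ring. Qed.

Lemma expect_centered_sqr q :
  E (fun w => ((w q)%:R - pair_prob q) ^+ 2) = pair_prob q * (1 - pair_prob q).
Proof.
by rewrite (expect_coord q (fun b => (b%:R - pair_prob q) ^+ 2)) /=; ring.
Qed.

Lemma expect_centered_mul q q' : q != q' ->
  E (fun w => ((w q)%:R - pair_prob q) * ((w q')%:R - pair_prob q')) = 0.
Proof.
move=> qq'; rewrite (expect_coord2 (fun b => b%:R - pair_prob q)
                                   (fun b => b%:R - pair_prob q')) //=.
by ring.
Qed.

Lemma Expect_quadform m (F : 'M[R]_n -> 'M[R]_m) (v : 'rV[R]_m) :
  (v *m Expect P F *m v^T) 0 0 = E (fun w => (v *m F (adj R w) *m v^T) 0 0).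
Proof.
rewrite /Expect mulmx_sumr mulmx_suml summxE; apply: eq_bigr => w _.
by rewrite -scalemxAr -scalemxAl mxE.
Qed.

End BernoulliOutcomes.

Section AdjacencyMoments.
Variables (R : realType) (n : nat) (P : 'M[R]_n).
Hypothesis P_sym : forall i j, P i j = P j i.

Local Notation E := (expect (weight P)).

Definition edge (i j : 'I_n) : option (upair n) :=
  if insub (i, j) is Some p then Some p else insub (j, i).

Lemma adj_edge (w : outcome n) i j :
  adj R w i j = if edge i j is Some p then (w p)%:R else 1.
Proof. by rewrite /adj mxE /edge; case: insub. Qed.

Lemma edge_val i j p : edge i j = Some p -> val p = (i, j) \/ val p = (j, i).
Proof.
rewrite /edge; case: insubP => [p' _ <- [<-]|_]; first by left.
by case: insubP => // p' _ <- [<-]; right.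
Qed.

Lemma edge_inj i j j' p : edge i j = Some p -> edge i j' = Some p -> j = j'.
Proof.
by move=> /edge_val vp /edge_val vp'; case: vp vp' => -> [] [] *; congruence.
Qed.

Variant edge_spec (i j : 'I_n) : option (upair n) -> Type :=
  | EdgeLoop of i = j : edge_spec i j None
  | EdgePair p of i != j & pair_prob P p = P i j : edge_spec i j (Some p).

Lemma edgeP i j : edge_spec i j (edge i j).
Proof.
case Eij: (edge i j) => [p|]; last first.
  constructor; move: Eij; rewrite /edge.
  case: insubP => [//|]; case: insubP => [//|] /=.
  rewrite -!leqNgt => le_ij le_ji _.
  by apply/val_inj/anti_leq; rewrite le_ij le_ji.
have ltp : ((val p).1 < (val p).2)%N := valP p.
constructor; rewrite /pair_prob; case: (edge_val Eij) ltp => -> /= ltp.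
- by rewrite neq_ltn ltp.
- by rewrite neq_ltn ltp orbT.
- by [].
- exact: P_sym.
Qed.

Definition adj_mean i j : R := if j == i then 1 else P i j.
Definition adj_var i j : R := if j == i then 0 else P i j * (1 - P i j).

Lemma expect_adj_centered i j : E (fun w => adj R w i j - adj_mean i j) = 0.
Proof.
under eq_expect do rewrite adj_edge.
rewrite /adj_mean; case: (edgeP i j) => [<-|p ij <-].
  by rewrite eqxx subrr expect0.
by rewrite eq_sym (negbTE ij) expect_centered.
Qed.

Lemma expect_adj_centered_sqr i j :
  E (fun w => (adj R w i j - adj_mean i j) ^+ 2) = adj_var i j.
Proof.
under eq_expect do rewrite adj_edge.
rewrite /adj_mean /adj_var; case: (edgeP i j) => [<-|p ij <-].
  by rewrite eqxx subrr expr0n expect0.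
by rewrite eq_sym (negbTE ij) expect_centered_sqr.
Qed.

Lemma expect_adj_uncorrelated i j j' : j != j' ->
  E (fun w => (adj R w i j - adj_mean i j) * (adj R w i j' - adj_mean i j')) = 0.
Proof.
move=> jj'; under eq_expect do rewrite !adj_edge.
move: (@edge_inj i j j'); rewrite /adj_mean.
case: (edgeP i j) => [<-|p ij <-] inj.
  rewrite -[RHS](expect0 (weight P)); apply: eq_expect => w.
  by rewrite eqxx subrr mul0r.
case: (edgeP i j') inj => [<-|p' ij' <-] inj.
  rewrite -[RHS](expect0 (weight P)); apply: eq_expect => w.
  by rewrite eqxx subrr mulr0.
rewrite eq_sym (negbTE ij) eq_sym (negbTE ij'); apply: expect_centered_mul.
by apply: contraNneq jj' => pp'; apply/eqP/(inj p); rewrite ?pp'.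
Qed.

Lemma expect_adj_row_sqr_ge i (y : 'I_n -> R) :
  \sum_j y j ^+ 2 * adj_var i j <= E (fun w => (\sum_j y j * adj R w i j) ^+ 2).
Proof.
under eq_bigr => j _ do rewrite -(expect_adj_centered_sqr i j).
exact: (expect_sqr_sum_ge (weight_sum1 P) _ (expect_adj_centered i)
                          (expect_adj_uncorrelated i)).
Qed.

End AdjacencyMoments.

Lemma lambda_min_ge_quadform (R : realType) K (S : 'M[R]_K) (c : R) :
  (forall v : 'rV[R]_K, c * \sum_l v 0 l ^+ 2 <= (v *m S *m v^T) 0 0) ->
  lambda_min_ge S c.
Proof.
move=> quad_ge a /eigenvalueP[v Sv v_neq0].
have norm_gt0 : 0 < \sum_l v 0 l ^+ 2.
  rewrite lt_def sumr_ge0 ?andbT => [|l _]; last exact: sqr_ge0.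
  apply: contraNneq v_neq0 => norm0; apply/eqP/rowP => l; apply/eqP.
  by rewrite mxE -sqrf_eq0 (psumr_eq0P (fun l _ => sqr_ge0 (v 0 l)) norm0).
rewrite -(ler_pM2r norm_gt0); apply: le_trans (quad_ge v) _.
have vvE : (v *m v^T) 0 0 = \sum_l v 0 l ^+ 2.
  by rewrite mxE; apply: eq_bigr => l _; rewrite mxE expr2.
by rewrite Sv -scalemxAl mxE vvE.
Qed.

Section StochasticBlockModel.
Variables (R : realType) (n K : nat) (psi : 'I_n -> 'I_K) (x : 'cV[R]_n).

Local Notation Z := (Zmat R psi).

Lemma sbm_probE (B : 'M[R]_K) a b : (Z *m B *m Z^T) a b = B (psi a) (psi b).
Proof.
rewrite mxE (bigD1 (psi b)) //= big1 ?addr0 => [|l /negbTE l_neq].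
  rewrite !mxE eqxx mulr1 (bigD1 (psi a)) //= big1 ?addr0 => [|l /negbTE l_neq].
    by rewrite !mxE eqxx mul1r.
  by rewrite !mxE eq_sym l_neq mul0r.
by rewrite !mxE eq_sym l_neq mulr0.
Qed.

Lemma Mk_mulmx_tr k (A : 'M[R]_n) (v : 'rV[R]_K) i :
  (Mk psi x k A *m v^T) i 0
  = (psi i == k)%:R * \sum_j x j 0 * v 0 (psi j) * A i j.
Proof.
rewrite /Mk -!mulmxA mul_diag_mx !mxE; congr (_ * _).
apply: eq_bigr => j _; rewrite !mxE big_ord1 !mxE mul1r.
rewrite (bigD1 (psi j)) //= big1 ?addr0 => [|l /negbTE l_neq].
  by rewrite !mxE eqxx mul1r mulrAC.
by rewrite !mxE eq_sym l_neq mul0r.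
Qed.

Lemma Hk_quadform k (A : 'M[R]_n) (v : 'rV[R]_K) :
  (v *m Hk psi x k A *m v^T) 0 0
  = \sum_i (psi i == k)%:R * (\sum_j x j 0 * v 0 (psi j) * A i j) ^+ 2.
Proof.
have -> : v *m Hk psi x k A *m v^T
          = (Mk psi x k A *m v^T)^T *m (Mk psi x k A *m v^T).
  by rewrite /Hk; move: (Mk _ _ _ _) => M; rewrite trmx_mul trmxK !mulmxA.
rewrite mxE; apply: eq_bigr => i _; rewrite mxE Mk_mulmx_tr.
by case: (psi i == k); rewrite ?mul1r ?mul0r // expr2.
Qed.

Lemma comm_size_sum k : \sum_i ((psi i == k)%:R : R) = (comm_size psi k)%:R.
Proof.
rewrite /comm_size -sum1_card natr_sum [RHS]big_mkcond.
by apply: eq_bigr => i _; rewrite inE; case: (psi i == k).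
Qed.

Lemma comm_size_sub1_le k j :
  (comm_size psi k)%:R - 1 <= \sum_i ((psi i == k)%:R * (i != j)%:R : R).
Proof.
rewrite -comm_size_sum (bigD1 j) //= [leRHS](bigD1 j) //= eqxx mulr0 add0r.
rewrite [leRHS](eq_bigr (fun i => (psi i == k)%:R)) => [|i /negbTE->];
  last exact: mulr1.
by rewrite lerBlDl lerD2r; case: (psi j == k).
Qed.

Lemma sum_sqnorm_xcomm (v : 'rV[R]_K) (g : 'I_K -> R) :
  \sum_l v 0 l ^+ 2 * (g l * sqnorm (xcomm psi x l))
  = \sum_j (x j 0 * v 0 (psi j)) ^+ 2 * g (psi j).
Proof.
rewrite /sqnorm; under eq_bigr do rewrite !mulr_sumr.
rewrite exchange_big; apply: eq_bigr => j _.
rewrite (bigD1 (psi j)) //= big1 ?addr0 => [|l /negbTE l_neq].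
  by rewrite /xcomm !mxE eqxx mul1r; ring.
by rewrite /xcomm !mxE eq_sym l_neq mul0r expr0n /= !mulr0.
Qed.

Lemma sum_adj_var_community_ge (B : 'M[R]_K) k (y : 'I_n -> R) :
  B^T = B -> (forall l, 0 <= B l k <= 1) ->
  \sum_j y j ^+ 2 * (B (psi j) k * (1 - B (psi j) k) * ((comm_size psi k)%:R - 1))
  <= \sum_i (psi i == k)%:R * \sum_j y j ^+ 2 * adj_var (Z *m B *m Z^T) i j.
Proof.
move=> B_sym B01; have B_symE a b : B a b = B b a by rewrite -{1}B_sym mxE.
under [leRHS]eq_bigr do rewrite mulr_sumr.
rewrite [leRHS]exchange_big /=; apply: ler_sum => j _.
have -> : \sum_i (psi i == k)%:R * (y j ^+ 2 * adj_var (Z *m B *m Z^T) i j)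
    = y j ^+ 2 * (B (psi j) k * (1 - B (psi j) k)
                  * \sum_i ((psi i == k)%:R * (i != j)%:R)).
  rewrite !mulr_sumr; apply: eq_bigr => i _.
  rewrite /adj_var sbm_probE (B_symE (psi i)) (eq_sym j i).
  have [<-|_] := eqVneq (psi i) k; last by rewrite /= !mul0r !mulr0.
  by case: (i == j); rewrite /=; ring.
have [B_ge0 B_le1] := andP (B01 (psi j)).
by rewrite ler_wpM2l ?sqr_ge0 // -!mulrA ler_wpM2l // ler_wpM2l ?subr_ge0 //
  comm_size_sub1_le.
Qed.

Lemma expect_Hk_quadform_ge (P : 'M[R]_n) k (v : 'rV[R]_K) :
  (forall i j, P i j = P j i) ->
  \sum_i (psi i == k)%:R * \sum_j (x j 0 * v 0 (psi j)) ^+ 2 * adj_var P i j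
  <= (v *m Expect P (Hk psi x k) *m v^T) 0 0.
Proof.
move=> P_sym; rewrite Expect_quadform; under eq_expect do rewrite Hk_quadform.
rewrite expect_sum; apply: ler_sum => i _; rewrite expectZ ler_wpM2l ?ler0n //.
exact: expect_adj_row_sqr_ge.
Qed.

End StochasticBlockModel.

Theorem mainTheorem3 (R : realType) (n K : nat) (psi : 'I_n -> 'I_K)
  (B : 'M[R]_K) (x : 'cV[R]_n) :
  (2 <= n)%N ->
  (forall k : 'I_K, (1 <= comm_size psi k)%N) ->
  B^T = B ->
  (forall k l : 'I_K, 0 <= B k l <= 1) ->
  forall k : 'I_K,
    lambda_min_ge
      (Expect (Zmat R psi *m B *m (Zmat R psi)^T) (Hk psi x k))
      (min_over (fun k' : 'I_K =>
         B k' k * (1 - B k' k) * ((comm_size psi k)%:R - 1)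
         * sqnorm (xcomm psi x k')) k).
Proof.
move=> _ _ B_sym B01 k; apply: lambda_min_ge_quadform => v.
set P := Zmat R psi *m B *m (Zmat R psi)^T.
have P_sym i j : P i j = P j i by rewrite !sbm_probE -{1}B_sym mxE.
apply: le_trans (expect_Hk_quadform_ge psi x k v P_sym).
apply: le_trans (sum_adj_var_community_ge psi _ B_sym (fun l => B01 l k)).
rewrite -(sum_sqnorm_xcomm psi x v (fun l => B l k * (1 - B l k) * _)) mulr_sumr.
apply: ler_sum => l _; rewrite mulrC ler_wpM2l ?sqr_ge0 //.
exact: bigmin_le.
Qed.
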